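(* Let $\tau : 2^{\mathit{Trace}_S} \to 2^{\mathit{Trace}_T}$ and $\sigma : 2^{\mathit{Trace}_T} \to 2^{\mathit{Trace}_S}$ form a Galois connection between the posets $(2^{\mathit{Trace}_S},\subseteq)$ and $(2^{\mathit{Trace}_T},\subseteq)$, with $\tau$ the lower adjoint and $\sigma$ the upper adjoint, i.e. for all $\pi_S \subseteq \mathit{Trace}_S$ and $\pi_T \subseteq \mathit{Trace}_T$: $\tau(\pi_S) \subseteq \pi_T \iff \pi_S \subseteq \sigma(\pi_T)$. Then, for any compilation chain, $\mathit{TP}^{\tau}$ holds if and only if $\mathit{TP}^{\sigma}$ holds, where $\mathit{TP}^{\tau} \equiv \forall \pi_S \subseteq \mathit{Trace}_S.\ \forall W.\ W \models \pi_S \Rightarrow W{\downarrow} \models \tau(\pi_S)$ and $\mathit{TP}^{\sigma} \equiv \forall \pi_T \subseteq \mathit{Trace}_T.\ \forall W.\ W \models \sigma(\pi_T) \Rightarrow W{\downarrow} \models \pi_T$.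
   Context: A compilation chain consists of a set of source (whole) programs $W$, a set of target programs, a set $\mathit{Trace}_S$ of source traces and a set $\mathit{Trace}_T$ of target traces, a source semantics relation $W \rightsquigarrow s$ (program $W$ can produce trace $s$), a target semantics relation of the same kind, and a compiler mapping each source program $W$ to a target program $W{\downarrow}$. A trace property is a set of traces; a (source or target) program $W$ satisfies a property $\pi$, written $W \models \pi$, iff every trace that $W$ produces belongs to $\pi$. *)

Definition prop (Trace : Type) := Trace -> Prop.

Definition subset {Trace : Type} (p q : prop Trace) : Prop :=
  forall t, p t -> q t.

Record comp_chain := {
  SProg : Type;
  TProg : Type;
  TraceS : Type;
  TraceT : Type;
  semS : SProg -> TraceS -> Prop;
  semT : TProg -> TraceT -> Prop;
  compile : SProg -> TProg
}.

Definition sat_S (C : comp_chain) (W : SProg C) (pi : prop (TraceS C)) : Prop :=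
  forall s, semS C W s -> pi s.
Definition sat_T (C : comp_chain) (W : TProg C) (pi : prop (TraceT C)) : Prop :=
  forall t, semT C W t -> pi t.

Definition galois_connection {S T : Type}
  (tau : prop S -> prop T) (sigma : prop T -> prop S) : Prop :=
  forall (piS : prop S) (piT : prop T),
    subset (tau piS) piT <-> subset piS (sigma piT).

Definition TP_tau (C : comp_chain) (tau : prop (TraceS C) -> prop (TraceT C)) : Prop :=
  forall (piS : prop (TraceS C)) (W : SProg C),
    sat_S C W piS -> sat_T C (compile C W) (tau piS).

Definition TP_sigma (C : comp_chain) (sigma : prop (TraceT C) -> prop (TraceS C)) : Prop :=
  forall (piT : prop (TraceT C)) (W : SProg C),
    sat_S C W (sigma piT) -> sat_T C (compile C W) piT.

(** Both criteria are consequences of each other through the unit and counit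
    of the Galois connection: [piS ⊆ sigma (tau piS)] turns a source
    hypothesis [W |= piS] into [W |= sigma (tau piS)], and
    [tau (sigma piT) ⊆ piT] weakens a target conclusion
    [W↓ |= tau (sigma piT)] to [W↓ |= piT]. *)


Lemma subset_refl {T : Type} (p : prop T) : subset p p.
Proof. intros t Ht; exact Ht. Qed.

Section GaloisConnection.

Variables (S T : Type) (tau : prop S -> prop T) (sigma : prop T -> prop S).
Hypothesis galois : galois_connection tau sigma.

Lemma galois_unit (piS : prop S) : subset piS (sigma (tau piS)).
Proof. apply galois, subset_refl. Qed.

Lemma galois_counit (piT : prop T) : subset (tau (sigma piT)) piT.
Proof. apply galois, subset_refl. Qed.

End GaloisConnection.

Lemma sat_S_weaken (C : comp_chain) (W : SProg C) (p q : prop (TraceS C)) :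
  subset p q -> sat_S C W p -> sat_S C W q.
Proof. intros Hpq Hp s Hs; apply Hpq, Hp, Hs. Qed.

Lemma sat_T_weaken (C : comp_chain) (W : TProg C) (p q : prop (TraceT C)) :
  subset p q -> sat_T C W p -> sat_T C W q.
Proof. intros Hpq Hp t Ht; apply Hpq, Hp, Ht. Qed.

Theorem theorem2p4 (C : comp_chain)
  (tau : prop (TraceS C) -> prop (TraceT C))
  (sigma : prop (TraceT C) -> prop (TraceS C)) :
  galois_connection tau sigma ->
  (TP_tau C tau <-> TP_sigma C sigma).
Proof.
  intros galois; split.
  - intros Htau piT W HW.
    apply (sat_T_weaken C _ (tau (sigma piT))).
    + exact (galois_counit _ _ tau sigma galois piT).
    + exact (Htau _ W HW).
  - intros Hsigma piS W HW.
    apply Hsigma, (sat_S_weaken C W piS).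
    + exact (galois_unit _ _ tau sigma galois piS).
    + exact HW.
Qed.
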